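(* Let $\hat P=\mathrm{Spec}(B)$ be an affine extension of a principal $\mathbb{G}_a$-bundle $P\to S_*$ with $\hat P\not\simeq S\times\mathbb{G}_a$. If $\mathrm{gr}_D(B)$ is generated as an $\mathcal O(S)$-algebra by its elements of degree $1$, then the exceptional fiber $E=\hat\pi^{-1}(\mathbf x)$ consists of $\mathbb{G}_a$-fixed points only.
   Context: All varieties are over $\mathbb{C}$. $S$ normal affine surface, $\mathbf{x}\in S$ a closed regular point, $S_*=S\setminus\{\mathbf{x}\}$. An affine extension of $\pi\colon P\to S_*$ is a normal affine $\mathbb{G}_a$-variety $\hat P=\mathrm{Spec}(B)$ with a morphism $\hat\pi\colon\hat P\to S$ and a $\mathbb{G}_a$-equivariant dominant open embedding $\iota\colon P\hookrightarrow\hat P$ with $\iota(P)=\hat\pi^{-1}(S_* )$ and $\hat\pi\circ\iota=\pi$. $D$ is the locally nilpotent derivation of $B$ corresponding to the $\mathbb{G}_a$-action, $\ker D=\mathcal O(S)$, and $\mathrm{gr}_D(B)=\bigoplus_{\nu\ge0}\ker D^{\nu+1}/\ker D^{\nu}$. *)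

From HB Require Import structures.
From mathcomp Require Import all_boot all_order all_algebra.
From mathcomp Require Import complex Rstruct.
Set Implicit Arguments. Unset Strict Implicit. Unset Printing Implicit Defensive.
Import Order.TTheory GRing.Theory Num.Theory.
Local Open Scope ring_scope.

Definition CC : closedFieldType := (Rdefinitions.R)[i].

Section Defs.

Variable R : comNzRingType.

Definition is_domain : Prop := forall x y : R, x * y = 0 -> x = 0 \/ y = 0.

(* integrally closed in its field of fractions: if x/y is integral over R,
   i.e. (x/y)^n + sum_{i<n} c_i (x/y)^i = 0, then x/y lies in R *)
Definition is_normal_domain : Prop :=
  is_domain /\
  forall x y : R, y != 0 ->
    (exists (n : nat) (c : 'I_n -> R),
        x ^+ n + \sum_(i < n) c i * x ^+ i * y ^+ (n - i) = 0) ->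
    exists z : R, x = z * y.

Definition is_ideal (P : R -> Prop) : Prop :=
  [/\ P 0, (forall x y, P x -> P y -> P (x + y)) &
      (forall a x, P x -> P (a * x))].

Definition prime_ideal (P : R -> Prop) : Prop :=
  [/\ is_ideal P, ~ P 1 & forall x y, P (x * y) -> P x \/ P y].

Definition strict_incl (P Q : R -> Prop) : Prop :=
  (forall x, P x -> Q x) /\ exists x, Q x /\ ~ P x.

Definition prime_chain_to (Q : R -> Prop) (n : nat) : Prop :=
  exists c : nat -> (R -> Prop),
    [/\ (forall i, (i <= n)%N -> prime_ideal (c i)),
        (forall i, (i < n)%N -> strict_incl (c i) (c i.+1)) &
        (forall x, c n x <-> Q x)].

Definition prime_chain (n : nat) : Prop :=
  exists c : nat -> (R -> Prop),
    (forall i, (i <= n)%N -> prime_ideal (c i)) /\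
    (forall i, (i < n)%N -> strict_incl (c i) (c i.+1)).

Definition krull_dim_eq (d : nat) : Prop := prime_chain d /\ ~ prime_chain d.+1.

Definition height_eq (Q : R -> Prop) (h : nat) : Prop :=
  prime_chain_to Q h /\ ~ prime_chain_to Q h.+1.

End Defs.

Section AlgDefs.

Variable A : comAlgType CC.

Definition fin_gen_alg : Prop :=
  exists (n : nat) (g : 'I_n -> A),
    forall P : A -> Prop,
      P 1 -> (forall x y, P x -> P y -> P (x + y)) ->
      (forall x y, P x -> P y -> P (x * y)) ->
      (forall (c : CC) x, P x -> P (c *: x)) ->
      (forall i, P (g i)) -> forall a, P a.

Definition normal_affine_algebra : Prop := fin_gen_alg /\ is_normal_domain A.

Definition normal_affine_surface_algebra : Prop :=
  normal_affine_algebra /\ krull_dim_eq A 2.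

(* closed points = CC-algebra homomorphisms A -> CC *)
Definition is_point (f : A -> CC) : Prop :=
  [/\ f 1 = 1, (forall x y, f (x + y) = f x + f y),
      (forall x y, f (x * y) = f x * f y) &
      (forall (c : CC) x, f (c *: x) = c * f x)].

Definition point_ideal (f : A -> CC) : A -> Prop := fun a => f a = 0.

(* the local ring A_m at m = point_ideal f is regular: its maximal ideal
   m A_m is generated by h = dim A_m = height m elements *)
Definition regular_point (f : A -> CC) : Prop :=
  exists h : nat, height_eq (point_ideal f) h /\
    exists u : 'I_h -> A, (forall i, f (u i) = 0) /\
      forall a, f a = 0 ->
        exists (s : A) (c : 'I_h -> A), f s != 0 /\ s * a = \sum_(i < h) c i * u i.

Definition is_alg_hom (B : comAlgType CC) (phi : A -> B) : Prop :=
  [/\ phi 1 = 1, (forall x y, phi (x + y) = phi x + phi y),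
      (forall x y, phi (x * y) = phi x * phi y) &
      (forall (c : CC) x, phi (c *: x) = c *: phi x)].

End AlgDefs.

Section LND.

Variable B : comAlgType CC.
Variable D : B -> B.

Definition is_LND : Prop :=
  [/\ (forall x y, D (x + y) = D x + D y),
      (forall (c : CC) x, D (c *: x) = c *: D x),
      (forall x y, D (x * y) = x * D y + D x * y) &
      (forall x, exists n, iter n D x = 0)].

(* exp(tD) b, computed as a finite sum when D^N b = 0 *)
Definition expD (t : CC) (b : B) (N : nat) : B :=
  \sum_(k < N) (t ^+ k / (k`!)%:R) *: iter k D b.

(* the closed point phi : B -> CC of Spec B is fixed by the G_a-action
   t . phi = phi o exp(tD) *)
Definition Ga_fixed_point (phi : B -> CC) : Prop :=
  forall (t : CC) (b : B) (N : nat), iter N D b = 0 -> phi (expD t b N) = phi b.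

(* gr_D(B) = (+)_nu ker D^{nu+1}/ker D^nu is generated, as an
   algebra over its degree-0 part ker D = O(S) (identified with A via iota),
   by its elements of degree 1: every class of degree nu is an
   A-linear combination of products of nu elements of degree 1. *)
Definition grD_generated_in_degree1 (A : comAlgType CC) (iota : A -> B) : Prop :=
  forall (nu : nat) (b : B), iter nu.+1 D b = 0 ->
    exists (n : nat) (a : 'I_n -> A) (y : 'I_n -> 'I_nu -> B),
      (forall i j, iter 2 D (y i j) = 0) /\
      iter nu D (b - \sum_(i < n) iota (a i) * \prod_(j < nu) y i j) = 0.

End LND.

(* The plinth ideal I = {a | iota a \in D(B)} of O(S) lies in the maximal
   ideal of x.  Otherwise either I = O(S), so that some s satisfies D s = 1 and
   B = O(S)[s] is trivial, or I is proper and, by the Nullstellensatz, vanishes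
   at a point eta of S \ {x}; but local triviality of the bundle near eta gives
   f with f(eta) <> 0 and f^n \in I.  Consequently a point phi of E kills D y
   whenever D^2 y = 0, since then D y = iota a with a \in I.  As gr_D(B) is
   generated in degree one, induction on the degree with the Leibniz rule shows
   that phi kills all of D(B), so phi is fixed by exp(tD).
   The Nullstellensatz is proved by the uncountability argument: if g - c were
   invertible modulo a proper ideal for every c, the inverses would form an
   uncountable family, linearly independent modulo the ideal, in an algebra of
   countable dimension. *)

From HB Require Import structures.
From mathcomp Require Import all_boot all_order all_algebra.
From mathcomp Require Import complex Rstruct.
From mathcomp Require Import ring.
From mathcomp Require Import boolp classical_sets functions cardinality Rstruct_topology.
From Stdlib Require Import Runcountable.
Set Implicit Arguments. Unset Strict Implicit. Unset Printing Implicit Defensive.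
Import GRing.Theory Num.Theory.
Local Open Scope ring_scope.

Section Uncountable.
Local Open Scope classical_set_scope.
Local Open Scope card_scope.

Lemma R_not_countable : ~ countable [set: Rdefinitions.R].
Proof.
move=> cR.
have leNR : [set: nat] #<= [set: Rdefinitions.R].
  apply/pcard_injP; exists (fun n : nat => (n%:R : Rdefinitions.R)).
  by move=> m n _ _ /eqP; rewrite eqr_nat => /eqP.
have /card_bijP[f [g fg gf]] := Cantor_Bernstein leNR cR.
have inN (n : nat) : [set: nat] n by [].
have inR (x : Rdefinitions.R) : [set: Rdefinitions.R] x by [].
apply: (R_uncountable (fun n => val (f (SigSub (mem_set (inN n)))))).
exists (fun x => val (g (SigSub (mem_set (inR x))))); split.
- move=> n /=; set z := f _.
  have -> : SigSub (mem_set (inR (val z))) = z by apply: val_inj.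
  by rewrite fg.
- move=> x /=; set z := g _.
  have -> : SigSub (mem_set (inN (val z))) = z by apply: val_inj.
  by rewrite gf.
Qed.

Lemma R_sublevel_infinite (f : Rdefinitions.R -> nat) :
  exists N (g : nat -> Rdefinitions.R), injective g /\ forall k, (f (g k) <= N)%N.
Proof.
apply: contrapT => H.
have fin N : finite_set [set x : Rdefinitions.R | (f x <= N)%N].
  apply: contrapT => /infiniteP /pcard_leP [F].
  apply: H; exists N, (fun n : nat => (F n : Rdefinitions.R)); split.
    by move=> x y; exact: (@inj _ _ _ F x y (mem_set I) (mem_set I)).
  by move=> k; exact: (@funS _ _ _ _ F k I).
apply: R_not_countable.
have -> : [set: Rdefinitions.R] = \bigcup_(N in [set: nat]) [set x | (f x <= N)%N].
  by apply/seteqP; split => [x _|//]; exists (f x) => //=.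
apply: bigcup_countable; first exact: countableP.
by move=> N _; apply: finite_set_countable.
Qed.

End Uncountable.

Lemma exists_linear_relation (F : fieldType) N (v : 'I_N.+1 -> 'I_N -> F) :
  exists2 lam : 'I_N.+1 -> F, exists k, lam k != 0 & forall i, \sum_k lam k * v k i = 0.
Proof.
pose M : 'M[F]_(N.+1, N) := \matrix_(k, i) v k i.
have : kermx M != 0.
  rewrite kermx_eq0 /row_free; apply: contraTneq (rank_leq_col M) => ->.
  by rewrite ltnn.
case/matrix0Pn => r [j Hj]; pose w := row r (kermx M).
have wK : w *m M = 0 by apply/sub_kermxP; apply: row_sub.
exists (fun k => w 0 k); first by exists j; rewrite mxE.
move=> i; transitivity ((w *m M) 0 i); last by rewrite wK mxE.
by rewrite mxE; apply: eq_bigr => k _; rewrite /M !mxE.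
Qed.

Section Ideals.
Variable R : comNzRingType.
Implicit Types (K : R -> Prop) (x y a u v : R).

Lemma is_ideal0 K : is_ideal K -> K 0.
Proof. by case. Qed.

Lemma is_idealD K x y : is_ideal K -> K x -> K y -> K (x + y).
Proof. by case=> _ hD _; apply: hD. Qed.

Lemma is_idealMl K x y : is_ideal K -> K x -> K (y * x).
Proof. by case=> _ _ hM; apply: hM. Qed.

Lemma is_idealMr K x y : is_ideal K -> K x -> K (x * y).
Proof. by move=> hK kx; rewrite mulrC; apply: is_idealMl. Qed.

Lemma is_idealN K x : is_ideal K -> K x -> K (- x).
Proof. by move=> hK kx; rewrite -mulN1r; apply: is_idealMl. Qed.

Lemma is_idealB K x y : is_ideal K -> K x -> K y -> K (x - y).
Proof. by move=> hK kx ky; apply: is_idealD => //; apply: is_idealN. Qed.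

Lemma is_ideal_sum K (I : Type) (r : seq I) (F : I -> R) :
  is_ideal K -> (forall i, K (F i)) -> K (\sum_(i <- r) F i).
Proof.
move=> hK hF; elim: r => [|i r IH]; first by rewrite big_nil; apply: is_ideal0.
by rewrite big_cons; apply: is_idealD.
Qed.

Definition adjoin_ideal K u : R -> Prop := fun x => exists k r, K k /\ x = k + r * u.

Lemma adjoin_ideal_ideal K u : is_ideal K -> is_ideal (adjoin_ideal K u).
Proof.
move=> hK; split.
- by exists 0, 0; split; [apply: is_ideal0 | rewrite mul0r addr0].
- move=> _ _ [k1 [r1 [k1K ->]]] [k2 [r2 [k2K ->]]].
  exists (k1 + k2), (r1 + r2); split; first exact: is_idealD.
  by rewrite mulrDl addrACA.
- move=> a _ [k [r [kK ->]]]; exists (a * k), (a * r); split; first exact: is_idealMl.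
  by rewrite mulrDr mulrA.
Qed.

Lemma adjoin_ideal_sub K u x : K x -> adjoin_ideal K u x.
Proof. by move=> kx; exists x, 0; rewrite mul0r addr0. Qed.

Lemma adjoin_ideal_gen K u : is_ideal K -> adjoin_ideal K u u.
Proof. by move=> hK; exists 0, 1; rewrite mul1r add0r; split => //; apply: is_ideal0. Qed.

Definition unit_mod K u := exists s, K (s * u - 1).

Lemma unit_modM K u v : is_ideal K -> unit_mod K u -> unit_mod K v -> unit_mod K (u * v).
Proof.
move=> hK [s1 h1] [s2 h2]; exists (s1 * s2).
have -> : s1 * s2 * (u * v) - 1 = (s1 * u - 1) * (s2 * v) + (s2 * v - 1) by ring.
by apply: is_idealD => //; apply: is_idealMr.
Qed.

Lemma unit_mod_prod K (I : Type) (r : seq I) (F : I -> R) :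
  is_ideal K -> (forall i, unit_mod K (F i)) -> unit_mod K (\prod_(i <- r) F i).
Proof.
move=> hK hF; elim: r => [|i r IH].
  by rewrite big_nil; exists 1; rewrite mul1r subrr; apply: is_ideal0.
by rewrite big_cons; apply: unit_modM.
Qed.

Lemma unit_mod_notin K u : is_ideal K -> ~ K 1 -> unit_mod K u -> ~ K u.
Proof.
move=> hK n1 [s hs] ku; apply: n1.
have -> : 1 = s * u - (s * u - 1) by ring.
by apply: is_idealB => //; apply: is_idealMl.
Qed.

End Ideals.

Section UnitsModIdeal.
Variables (F : closedFieldType) (A : comAlgType F).
Implicit Types (K : A -> Prop).

Lemma is_idealZ K (c : F) x : is_ideal K -> K x -> K (c *: x).
Proof. by move=> hK kx; rewrite -mulr_algl; apply: is_idealMl. Qed.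

Lemma horner_alg_XsubC (g : A) (c : F) : horner_alg g ('X - c%:P) = g - c%:A.
Proof. by rewrite rmorphB /= horner_algX horner_algC. Qed.

Lemma horner_alg_in_ideal_eq0 K (g : A) : is_ideal K -> ~ K 1 ->
  (forall c : F, unit_mod K (g - c%:A)) ->
  forall p : {poly F}, K (horner_alg g p) -> p = 0.
Proof.
move=> hK n1 hu p kp; apply: contrapT => /eqP pn0.
have [r Hr] := closed_field_poly_normal p.
move: kp; rewrite Hr linearZ /= rmorph_prod /= => kp.
have kq : K (\prod_(z <- r) horner_alg g ('X - z%:P)).
  have := @is_idealZ _ (lead_coef p)^-1 _ hK kp.
  by rewrite mulr_algl scalerA mulVf ?scale1r ?lead_coef_eq0.
apply: (unit_mod_notin hK n1 _ kq); apply: unit_mod_prod => // z.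
by rewrite horner_alg_XsubC.
Qed.

(* The inverses of [g - c] modulo [K] are linearly independent modulo [K]: a
   relation, multiplied by [prod_k (g - c k)], gives a polynomial in [g] lying
   in [K], which is nonzero at the [c k] with nonzero coefficient. *)
Lemma inverses_mod_ideal_free K (g : A) (r : F -> A) : is_ideal K -> ~ K 1 ->
  (forall c, K (r c * (g - c%:A) - 1)) ->
  forall m (c : 'I_m -> F) (lam : 'I_m -> F), injective c ->
  (exists k, lam k != 0) -> ~ K (\sum_k lam k *: r (c k)).
Proof.
move=> hK n1 hr m c lam cinj [k0 lk0] kS.
pose Q k := \prod_(j | j != k) ('X - (c j)%:P).
pose P := \sum_k lam k *: Q k.
have ePi k : horner_alg g (\prod_j ('X - (c j)%:P)) = (g - (c k)%:A) * horner_alg g (Q k).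
  by rewrite (bigD1 k) //= rmorphM /= horner_alg_XsubC.
have kP : K (horner_alg g P).
  have -> : horner_alg g P =
      horner_alg g (\prod_j ('X - (c j)%:P)) * (\sum_k lam k *: r (c k)) +
      \sum_k lam k *: (- (horner_alg g (Q k) * (r (c k) * (g - (c k)%:A) - 1))).
    rewrite mulr_sumr -big_split /= /P linear_sum /=; apply: eq_bigr => k _.
    rewrite linearZ /= mulr_algl -scalerAr -scalerDr (ePi k); congr (_ *: _); ring.
  apply: is_idealD => //; first exact: is_idealMl.
  apply: is_ideal_sum => // k.
  by apply: is_idealZ => //; apply: is_idealN => //; apply: is_idealMl.
have hu d : unit_mod K (g - d%:A) by exists (r d).
have := congr1 (fun q => q.[c k0]) (horner_alg_in_ideal_eq0 hK n1 hu kP).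
rewrite horner0 /P horner_sum (bigD1 k0) //= big1 ?addr0; last first.
  move=> k kk0; rewrite hornerZ horner_prod (bigD1 k0) 1?eq_sym //=.
  by rewrite hornerXsubC subrr mul0r mulr0.
rewrite hornerZ horner_prod => /eqP; rewrite mulf_eq0 (negbTE lk0) /=.
apply/negP/prodf_neq0 => j jk0; rewrite hornerXsubC subr_eq0.
by apply: contra jk0 => /eqP /cinj ->.
Qed.

End UnitsModIdeal.

Section Nullstellensatz.
Variable A : comAlgType CC.
Implicit Types (K J : A -> Prop) (x y a : A).

Definition monomial n (gen : 'I_n -> A) (w : seq 'I_n) : A := \prod_(i <- w) gen i.

Lemma fin_gen_monomial_span : fin_gen_alg A -> exists n (gen : 'I_n -> A),
  forall a, exists s : seq (CC * seq 'I_n), a = \sum_(p <- s) p.1 *: monomial gen p.2.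
Proof.
case=> n [gen gen_ind]; exists n, gen; apply: gen_ind.
- by exists [:: (1, [::])]; rewrite big_seq1 /monomial big_nil scale1r.
- by move=> x y [s1 ->] [s2 ->]; exists (s1 ++ s2); rewrite big_cat.
- move=> x y [s1 ->] [s2 ->]; exists [seq (p.1 * q.1, p.2 ++ q.2) | p <- s1, q <- s2].
  rewrite big_allpairs_dep /= mulr_suml; apply: eq_bigr => p _.
  rewrite mulr_sumr; apply: eq_bigr => q _.
  by rewrite /monomial big_cat /= -scalerAl -scalerAr scalerA.
- move=> c x [s ->]; exists [seq (c * p.1, p.2) | p <- s].
  by rewrite big_map scaler_sumr; apply: eq_bigr => p _; rewrite scalerA.
- by move=> i; exists [:: (1, [:: i])]; rewrite big_seq1 /monomial big_seq1 scale1r.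
Qed.

Definition monomial_enum n (gen : 'I_n -> A) (i : nat) : A :=
  monomial gen (odflt [::] (unpickle i)).

Lemma fin_gen_countable_span : fin_gen_alg A -> exists e : nat -> A,
  forall a, exists N, forall M, (N <= M)%N ->
    exists c : 'I_M -> CC, a = \sum_(i < M) c i *: e i.
Proof.
move=> /fin_gen_monomial_span [n [gen span]].
exists (monomial_enum gen) => a.
have [s ->] := span a; exists (\max_(p <- s) (pickle p.2).+1) => M hM.
exists (fun i : 'I_M => \sum_(p <- s | pickle p.2 == i) p.1).
under [RHS]eq_bigr => i _ do rewrite scaler_suml big_mkcond.
rewrite exchange_big /= big_seq [RHS]big_seq; apply: eq_bigr => p ps.
have hp : (pickle p.2 < M)%N.
  apply: leq_trans hM.
  exact: (@leq_bigmax_seq _ s xpredT (fun p : CC * seq 'I_n => (pickle p.2).+1) p ps).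
rewrite (bigD1 (Ordinal hp)) //= eqxx /monomial_enum pickleK big1 ?addr0 // => i ih.
by case: eqP => // e; move: ih; rewrite -val_eqE /= e eqxx.
Qed.

Lemma exists_proper_adjoin_XsubC K (g : A) : fin_gen_alg A -> is_ideal K -> ~ K 1 ->
  exists c : CC, ~ adjoin_ideal K (g - c%:A) 1.
Proof.
move=> hA hK n1; apply: contrapT => all_improper.
have inv_mod c : exists r, K (r * (g - c%:A) - 1).
  apply: contrapT => no_inv; apply: all_improper; exists c => -[k [r [kK e]]].
  apply: no_inv; exists r.
  have -> : r * (g - c%:A) - 1 = - k by rewrite [X in _ - X]e; ring.
  exact: is_idealN.
have [r hr] := choice inv_mod.
have [e span] := fin_gen_countable_span hA.
have [N hN] := choice span.
pose embed (t : Rdefinitions.R) : CC := Complex t 0.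
have [M [t [t_inj htM]]] := R_sublevel_infinite (fun t => N (r (embed t))).
pose c (k : 'I_M.+1) := embed (t k).
have c_inj : injective c by move=> k1 k2 [] /t_inj /val_inj.
have [v hv] := choice (fun k : 'I_M.+1 => hN (r (c k)) M (htM k)).
have [lam lam_nz hlam] := exists_linear_relation v.
apply: (inverses_mod_ideal_free hK n1 hr c_inj lam_nz).
have -> : \sum_k lam k *: r (c k) = 0.
  under eq_bigr => k _ do rewrite [r (c k)]hv scaler_sumr.
  rewrite exchange_big /= big1 // => i _.
  under eq_bigr => k _ do rewrite scalerA.
  by rewrite -scaler_suml hlam scale0r.
exact: is_ideal0.
Qed.

Section Residues.
Variable K : A -> Prop.
Hypothesis hK : is_ideal K.

Lemma residue1 : K (1 - 1%:A).
Proof. by rewrite scale1r subrr; apply: is_ideal0. Qed.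

Lemma residueD x y c d : K (x - c%:A) -> K (y - d%:A) -> K (x + y - (c + d)%:A).
Proof.
move=> hx hy; have -> : x + y - (c + d)%:A = (x - c%:A) + (y - d%:A).
  by rewrite scalerDl; ring.
exact: is_idealD.
Qed.

Lemma residueM x y c d : K (x - c%:A) -> K (y - d%:A) -> K (x * y - (c * d)%:A).
Proof.
move=> hx hy; have -> : x * y - (c * d)%:A = (x - c%:A) * y + c%:A * (y - d%:A).
  by rewrite -[(c * d)%:A]scalerA -mulr_algl; ring.
by apply: is_idealD => //; [apply: is_idealMr | apply: is_idealMl].
Qed.

Lemma residueZ b x d : K (x - d%:A) -> K (b *: x - (b * d)%:A).
Proof. by move=> hx; rewrite -scalerA -scalerBr; apply: is_idealZ. Qed.

Lemma residue_unique x c d : ~ K 1 -> K (x - c%:A) -> K (x - d%:A) -> c = d.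
Proof.
move=> n1 hc hd; apply: contrapT => /eqP cd; apply: n1.
have := @is_idealZ _ _ _ (c - d)^-1 _ hK (is_idealB hK hd hc).
have -> : x - d%:A - (x - c%:A) = (c - d)%:A by rewrite scalerBl; ring.
by rewrite scalerA mulVf ?scale1r // subr_eq0.
Qed.

Lemma residue_point : ~ K 1 -> (forall a, exists c : CC, K (a - c%:A)) ->
  exists eta : A -> CC, is_point eta /\ forall a, K a -> eta a = 0.
Proof.
move=> n1 /choice [eta heta]; have uniq := residue_unique n1.
exists eta; split; last first.
  by move=> a ka; apply: (uniq a) => //; rewrite scale0r subr0.
split.
- exact: uniq (heta 1) residue1.
- by move=> x y; apply: uniq (heta _) (residueD (heta x) (heta y)).
- by move=> x y; apply: uniq (heta _) (residueM (heta x) (heta y)).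
- by move=> b x; apply: uniq (heta _) (residueZ b (heta x)).
Qed.

End Residues.

(* Adjoining [gen i - c_i] for suitable constants, one generator at a time,
   keeps the ideal proper. *)
Lemma exists_residue_ideal J : fin_gen_alg A -> is_ideal J -> ~ J 1 ->
  exists K, [/\ is_ideal K, ~ K 1, (forall a, J a -> K a) &
                forall a, exists c : CC, K (a - c%:A)].
Proof.
move=> hA hJ nJ; case: (hA) => n [gen gen_ind].
have step k : (k <= n)%N -> exists K, [/\ is_ideal K, ~ K 1, (forall a, J a -> K a) &
    forall i : 'I_n, (i < k)%N -> exists c : CC, K (gen i - c%:A)].
  elim: k => [_|k IH hk]; first by exists J; split.
  have [K [hK nK JK hi]] := IH (ltnW hk).
  have [c hc] := exists_proper_adjoin_XsubC (gen (Ordinal hk)) hA hK nK.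
  exists (adjoin_ideal K (gen (Ordinal hk) - c%:A)); split => //.
  - exact: adjoin_ideal_ideal.
  - by move=> a /JK; apply: adjoin_ideal_sub.
  move=> i; rewrite ltnS leq_eqVlt => /orP [/eqP ei|lik].
    exists c; have -> : i = Ordinal hk by apply: val_inj.
    exact: adjoin_ideal_gen.
  by have [d hd] := hi i lik; exists d; apply: adjoin_ideal_sub.
have [K [hK nK JK hi]] := step n (leqnn n).
exists K; split => //; apply: gen_ind.
- by exists 1; apply: residue1.
- by move=> x y [c hc] [d hd]; exists (c + d); apply: residueD.
- by move=> x y [c hc] [d hd]; exists (c * d); apply: residueM.
- by move=> b x [d hd]; exists (b * d); apply: residueZ.
- by move=> i; apply: hi.
Qed.

Lemma nullstellensatz J : fin_gen_alg A -> is_ideal J -> ~ J 1 ->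
  exists eta : A -> CC, is_point eta /\ forall a, J a -> eta a = 0.
Proof.
move=> hA hJ nJ; have [K [hK nK JK res]] := exists_residue_ideal hA hJ nJ.
have [eta [heta etaK]] := residue_point hK nK res.
by exists eta; split => // a /JK /etaK.
Qed.

End Nullstellensatz.

Section Points.
Variables (A : comAlgType CC) (phi : A -> CC).
Hypothesis hphi : is_point phi.

Lemma point0 : phi 0 = 0.
Proof. by case: hphi => _ phiD _ _; apply: (addrI (phi 0)); rewrite -phiD !addr0. Qed.
Lemma point1 : phi 1 = 1. Proof. by case: hphi. Qed.
Lemma pointD x y : phi (x + y) = phi x + phi y. Proof. by case: hphi. Qed.
Lemma pointM x y : phi (x * y) = phi x * phi y. Proof. by case: hphi. Qed.
Lemma pointZ c x : phi (c *: x) = c * phi x. Proof. by case: hphi. Qed.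

Lemma pointX x n : phi (x ^+ n) = phi x ^+ n.
Proof. by elim: n => [|n IH]; rewrite ?point1 // !exprS pointM IH. Qed.

Lemma point_sum (I : Type) (r : seq I) (F : I -> A) :
  phi (\sum_(i <- r) F i) = \sum_(i <- r) phi (F i).
Proof.
elim: r => [|i r IH]; first by rewrite !big_nil point0.
by rewrite !big_cons pointD IH.
Qed.

End Points.

Section LND.
Variables (B : comAlgType CC) (D : B -> B).
Hypothesis hD : is_LND D.

Lemma lndD x y : D (x + y) = D x + D y. Proof. by case: hD. Qed.
Lemma lndM x y : D (x * y) = x * D y + D x * y. Proof. by case: hD. Qed.

Lemma lnd0 : D 0 = 0.
Proof. by apply: (addrI (D 0)); rewrite -lndD !addr0. Qed.

Lemma lnd1 : D 1 = 0.
Proof.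
have h := lndM 1 1; rewrite !mul1r mulr1 in h.
by apply: (addrI (D 1)); rewrite addr0 -h.
Qed.

Lemma lndN x : D (- x) = - D x.
Proof. by apply/eqP; rewrite -addr_eq0 -lndD addNr lnd0. Qed.

Lemma lnd_nilpotent x : exists n, iter n D x = 0.
Proof. by case: hD => _ _ _. Qed.

(* All terms of [expD t b N] but the first lie in [D B]. *)
Lemma Ga_fixed_point_of_image_eq0 (phi : B -> CC) : is_point phi ->
  (forall b, phi (D b) = 0) -> Ga_fixed_point D phi.
Proof.
move=> hphi phiD t b [|N] hN; first by rewrite /expD big_ord0 -hN.
rewrite /expD big_ord_recl (pointD hphi) (point_sum hphi) big1 ?addr0.
  by rewrite (pointZ hphi) expr0 fact0 invr1 !mul1r.
by move=> i _; rewrite (pointZ hphi) /= phiD mulr0.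
Qed.

(* [phi o D] is a derivation at the point [phi], so it kills products of
   elements it kills; by the generation hypothesis an element of degree
   [nu + 1] is an [A]-combination of products of degree-one elements up to an
   element of degree [nu]. *)
Lemma point_lnd_eq0 (A : comAlgType CC) (iota : A -> B) (phi : B -> CC) :
  is_point phi -> grD_generated_in_degree1 D iota ->
  (forall a, D (iota a) = 0) ->
  (forall y, D (D y) = 0 -> phi (D y) = 0) ->
  forall b, phi (D b) = 0.
Proof.
move=> hphi hgr Dio phiD1.
pose killed x := phi (D x) = 0.
have killed0 : killed 0 by rewrite /killed lnd0 point0.
have killedD x y : killed x -> killed y -> killed (x + y).
  by rewrite /killed lndD pointD // => -> ->; rewrite addr0.
have killedM x y : killed x -> killed y -> killed (x * y).
  by rewrite /killed lndM pointD ?pointM // => -> ->; rewrite mulr0 mul0r addr0.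
have killed_iota a : killed (iota a) by rewrite /killed Dio point0.
suff deg nu b : iter nu.+1 D b = 0 -> killed b.
  by move=> b; have [[/= ->|nu /deg //]] := lnd_nilpotent b.
elim: nu b => [|nu IH] b hb; first by rewrite /killed; move: hb => /= ->; rewrite point0.
have [n [a [y [hy hr]]]] := hgr nu.+1 b hb.
set S := \sum_(i < n) iota (a i) * \prod_(j < nu.+1) y i j in hr.
have killedS : killed S.
  apply: (big_ind killed) => // i _; apply: (killedM) => //.
  apply: (big_ind killed) => //; first by rewrite /killed lnd1 point0.
  by move=> j _; exact: phiD1 (hy i j).
by rewrite -[b](subrK S); apply: killedD => //; apply: IH.
Qed.

End LND.

Section Plinth.
Variables (A B : comAlgType CC) (iota : A -> B) (D : B -> B).
Hypothesis hiota : is_alg_hom iota.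
Hypothesis hD : is_LND D.
Hypothesis hker : forall b : B, D b = 0 <-> exists a : A, b = iota a.

(* [iota] under a name carrying its ring morphism structure. *)
Definition iota_rmorph : A -> B := iota.

Lemma iota0 : iota 0 = 0.
Proof. by case: hiota => _ iotaD _ _; apply: (addrI (iota 0)); rewrite -iotaD !addr0. Qed.

Lemma iota_nmod_morphism : nmod_morphism iota_rmorph.
Proof. by split; [exact: iota0 | case: hiota]. Qed.
HB.instance Definition _ :=
  GRing.isNmodMorphism.Build A B iota_rmorph iota_nmod_morphism.

Lemma iota_monoid_morphism : monoid_morphism iota_rmorph.
Proof. by case: hiota. Qed.
HB.instance Definition _ :=
  GRing.isMonoidMorphism.Build A B iota_rmorph iota_monoid_morphism.

Lemma lnd_iota a : D (iota a) = 0.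
Proof. by apply/hker; exists a. Qed.

Definition trivial_extension : Prop :=
  exists Phi : {poly A} -> B,
     [/\ bijective Phi, Phi 1 = 1,
         (forall p q, Phi (p + q) = Phi p + Phi q) /\
         (forall p q, Phi (p * q) = Phi p * Phi q),
         (forall a, Phi a%:P = iota a) &
         (forall p, Phi (p^`()) = D (Phi p))].

Definition plinth (a : A) : Prop := exists y, D y = iota a.

Lemma plinth_ideal : is_ideal plinth.
Proof.
split.
- by exists 0; rewrite (lnd0 hD) iota0.
- move=> x y [u hu] [v hv]; exists (u + v).
  by rewrite (lndD hD) hu hv -[iota (x + y)]/(iota_rmorph _) rmorphD.
- move=> a x [u hu]; exists (iota a * u).
  by rewrite (lndM hD) hu lnd_iota mul0r addr0 -[iota (a * x)]/(iota_rmorph _) rmorphM.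
Qed.

Section Slice.
Hypothesis hiota_inj : injective iota.
Variable s : B.
Hypothesis hs : D s = 1.

Definition slice_eval (p : {poly A}) : B := (map_poly iota_rmorph p).[s].

Lemma slice_eval1 : slice_eval 1 = 1.
Proof. by rewrite /slice_eval rmorph1 hornerC. Qed.
Lemma slice_evalD p q : slice_eval (p + q) = slice_eval p + slice_eval q.
Proof. by rewrite /slice_eval rmorphD hornerD. Qed.
Lemma slice_evalB p q : slice_eval (p - q) = slice_eval p - slice_eval q.
Proof. by rewrite /slice_eval rmorphB hornerD hornerN. Qed.
Lemma slice_evalM p q : slice_eval (p * q) = slice_eval p * slice_eval q.
Proof. by rewrite /slice_eval rmorphM hornerM. Qed.
Lemma slice_evalC a : slice_eval a%:P = iota a.
Proof. by rewrite /slice_eval map_polyC hornerC. Qed.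

Lemma slice_eval_deriv p : slice_eval p^`() = D (slice_eval p).
Proof.
rewrite /slice_eval -deriv_map; elim/poly_ind: p => [|p c IH].
  by rewrite rmorph0 deriv0 horner0 (lnd0 hD).
rewrite rmorphD rmorphM /= map_polyX map_polyC /= derivMXaddC hornerMXaddC.
by rewrite hornerD hornerM hornerX (lndD hD) (lndM hD) hs -IH lnd_iota addr0 mulr1.
Qed.

Lemma slice_eval_inj : injective slice_eval.
Proof.
suff eq0 p : slice_eval p = 0 -> p = 0.
  move=> p q e; apply/eqP; rewrite -subr_eq0; apply/eqP/eq0.
  by rewrite slice_evalB e subrr.
move: {2}(size p) (leqnn (size p)) => n; elim: n p => [|n IH] p hp e.
  by apply/eqP; rewrite -size_poly_eq0 -leqn0.
have p'0 : p^`() = 0.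
  have [->|pn0] := eqVneq p 0; first by rewrite deriv0.
  apply: IH; last by rewrite slice_eval_deriv e (lnd0 hD).
  by rewrite -ltnS (leq_trans (lt_size_deriv pn0)).
have pC : p = (p`_0)%:P.
  apply/polyP => [[|i]]; rewrite coefC //=.
  have /eqP := congr1 (fun q : {poly A} => q`_i) p'0.
  by rewrite coef_deriv coef0 -scaler_nat scaler_eq0 pnatr_eq0 => /eqP.
have : iota p`_0 = iota 0 by rewrite -slice_evalC -pC e iota0.
by move=> /hiota_inj p00; rewrite pC p00.
Qed.

Definition antideriv (p : {poly A}) : {poly A} :=
  \poly_(i < (size p).+1) (if i is j.+1 then (j.+1%:R : CC)^-1 *: p`_j else 0).

Lemma antiderivK p : (antideriv p)^`() = p.
Proof.
apply/polyP => i; rewrite coef_deriv coef_poly ltnS.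
case: leqP => hi; first by rewrite mul0rn nth_default.
by rewrite scalerMnl -mulr_natr mulVf ?pnatr_eq0 // scale1r.
Qed.

(* By induction on the nilpotency order: a primitive of a preimage of [D b]
   differs from [b] by an element of [ker D = iota A]. *)
Lemma slice_eval_surj b : exists p, slice_eval p = b.
Proof.
have [n] := lnd_nilpotent hD b; elim: n b => [|n IH] b hn.
  by exists 0; rewrite /slice_eval rmorph0 horner0 -hn.
have [p hp] : exists p, slice_eval p = D b by apply: IH; rewrite -iterSr.
have /hker [a ha] : D (b - slice_eval (antideriv p)) = 0.
  by rewrite (lndD hD) (lndN hD) -slice_eval_deriv antiderivK hp subrr.
by exists (antideriv p + a%:P); rewrite slice_evalD slice_evalC -ha addrC subrK.
Qed.

Lemma slice_trivial_extension : trivial_extension.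
Proof.
have [g hg] := choice slice_eval_surj.
exists slice_eval; split.
- by exists g => // p; apply: slice_eval_inj; rewrite hg.
- exact: slice_eval1.
- by split; [exact: slice_evalD | exact: slice_evalM].
- exact: slice_evalC.
- exact: slice_eval_deriv.
Qed.

End Slice.

Lemma plinth1_trivial_extension : injective iota -> plinth 1 -> trivial_extension.
Proof.
move=> hinj [s hs]; apply: (slice_trivial_extension hinj (s := s)).
by rewrite hs -[iota 1]/(iota_rmorph 1) rmorph1.
Qed.

Definition locally_trivial_off (xi : A -> CC) : Prop :=
  forall eta : A -> CC, is_point eta -> (exists a, eta a != xi a) ->
    exists f : A, [/\ xi f = 0, eta f != 0 &
      exists (s : B) (n : nat), D s = iota (f ^+ n)].

Lemma plinth_vanishes (xi : A -> CC) : fin_gen_alg A -> injective iota ->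
  ~ trivial_extension -> locally_trivial_off xi ->
  forall a, plinth a -> xi a = 0.
Proof.
move=> hA hinj nontriv hbundle a0 Ia0; apply: contrapT => /eqP xa0.
have I1 : plinth 1.
  apply: contrapT => nI1.
  have [eta [heta etaI]] := nullstellensatz hA plinth_ideal nI1.
  have [|f [_ etaf [s [n hsn]]]] := hbundle eta heta.
    by exists a0; rewrite (etaI _ Ia0) eq_sym.
  have /etaI : plinth (f ^+ n) by exists s.
  by rewrite (pointX heta) => /eqP; rewrite expf_eq0 (negbTE etaf) andbF.
exact: nontriv (plinth1_trivial_extension hinj I1).
Qed.

End Plinth.

Theorem mainTheorem12
  (A B : comAlgType CC) (iota : A -> B) (D : B -> B) (xi : A -> CC)
  (hS : normal_affine_surface_algebra A)
  (hB : normal_affine_algebra B)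
  (hiota : is_alg_hom iota) (hiota_inj : injective iota)
  (hD : is_LND D)
  (hker : forall b : B, D b = 0 <-> exists a : A, b = iota a)
  (hxi : is_point xi) (hxreg : regular_point xi)
  (hbundle : forall eta : A -> CC, is_point eta -> (exists a, eta a != xi a) ->
     exists f : A, [/\ xi f = 0, eta f != 0 &
        exists (s : B) (n : nat), D s = iota (f ^+ n)])
  (hnontriv : ~ exists Phi : {poly A} -> B,
     [/\ bijective Phi, Phi 1 = 1,
         (forall p q, Phi (p + q) = Phi p + Phi q) /\
         (forall p q, Phi (p * q) = Phi p * Phi q),
         (forall a, Phi a%:P = iota a) &
         (forall p, Phi (p^`()) = D (Phi p))])
  (hgr : grD_generated_in_degree1 D iota) :
  forall phi : B -> CC, is_point phi -> (forall a, phi (iota a) = xi a) ->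
    Ga_fixed_point D phi.
Proof.
move=> phi hphi hphixi.
have plinth_xi := plinth_vanishes hiota hD hker hS.1.1 hiota_inj hnontriv hbundle.
apply: (Ga_fixed_point_of_image_eq0 hphi).
apply: (point_lnd_eq0 hD hphi hgr (lnd_iota hker)) => y /hker [a Dy].
by rewrite Dy hphixi; apply: plinth_xi; exists y.
Qed.
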